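(* Suppose $h_{ij}=h$ for all $i\in\mathcal{M}$, $j\in\mathcal{N}$ (for a constant $h>0$). Then the set of Nash equilibria of the finite game with players $\mathcal{M}$, action set $\mathcal{N}$ and tolled costs $\bar c_i(\mathbf{a})=\sum_{l\in\mathcal{M}_{a_i}(\mathbf{a})}\frac{\sigma^2}{h_{la_i}}\frac{\beta_l}{[1-S_i(\mathbf{a})]^+}-\sum_{l\in\mathcal{M}_{a_i}(\mathbf{a})\setminus\{i\}}\frac{\sigma^2}{h_{la_i}}\frac{\beta_l}{[1-S_i(\mathbf{a})+\beta_i]^+}$ coincides with the set of Nash equilibria of the game with the same players and actions and costs $c_i(\mathbf{a})=\frac{\sigma^2}{h_{ia_i}}\frac{\beta_i}{[1-S_i(\mathbf{a})]^+}$, where $S_i(\mathbf{a})=\sum_{k\in\mathcal{M}_{a_i}(\mathbf{a})}\beta_k$.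
   Context: Uplink cellular model: mobiles $\mathcal{M}=\{1,\dots,M\}$, BSs $\mathcal{N}=\{1,\dots,N\}$, power gains $h_{ij}>0$, noise power $\sigma^2>0$, target SINRs $\gamma_i>0$, $\beta_i=\gamma_i/(1+\gamma_i)$. Association profile $\mathbf{a}\in\mathcal{N}^M$, $\mathcal{M}_j(\mathbf{a})=\{l: a_l=j\}$, $[x]^+=\max(x,0)$, positive$/0=+\infty$, and $\bar c_i(\mathbf{a})=+\infty$ whenever its first sum is infinite. $(b,\mathbf{a}_{-i})$ replaces $a_i$ by $b$. For a game with costs $d_i$, $\mathbf{a}$ is a Nash equilibrium if $a_i\in\arg\min_{b\in\mathcal{N}}d_i(b,\mathbf{a}_{-i})$ for all $i$. Standing assumption: there exists at least one feasible association, i.e. some $\mathbf{a}$ with $\sum_{l\in\mathcal{M}_j(\mathbf{a})}\beta_l<1$ for all $j$. *)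

From HB Require Import structures.
From mathcomp Require Import all_boot all_order all_algebra.
From mathcomp Require Import boolp classical_sets reals constructive_ereal ereal.
Set Implicit Arguments. Unset Strict Implicit. Unset Printing Implicit Defensive.
Import Order.TTheory GRing.Theory Num.Theory.
Local Open Scope ring_scope.

Section Uplink.
Context {R : realType} {M N : nat}.

Definition profile := {ffun 'I_M -> 'I_N}.

Definition upd (a : profile) (i : 'I_M) (b : 'I_N) : profile :=
  [ffun l => if l == i then b else a l].

Definition beta (gamma : 'I_M -> R) (i : 'I_M) : R := gamma i / (1 + gamma i).

Definition posp (x : R) : R := Num.max x 0.

(* x / y as an extended real, with the convention positive/0 = +oo
   (only used with positive numerator x and y = [.]^+ >= 0) *)
Definition divE (x y : R) : \bar R := if 0 < y then (x / y)%:E else +oo%E.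

Definition Sload (gamma : 'I_M -> R) (a : profile) (i : 'I_M) : R :=
  \sum_(k | a k == a i) beta gamma k.

Definition cost (sigma2 : R) (h : 'I_M -> 'I_N -> R) (gamma : 'I_M -> R)
    (a : profile) (i : 'I_M) : \bar R :=
  divE (sigma2 / h i (a i) * beta gamma i) (posp (1 - Sload gamma a i)).

Definition tcost (sigma2 : R) (h : 'I_M -> 'I_N -> R) (gamma : 'I_M -> R)
    (a : profile) (i : 'I_M) : \bar R :=
  let first := (\sum_(l | a l == a i)
       divE (sigma2 / h l (a i) * beta gamma l) (posp (1 - Sload gamma a i)))%E in
  let second := (\sum_(l | (a l == a i) && (l != i))
       divE (sigma2 / h l (a i) * beta gamma l)
            (posp (1 - Sload gamma a i + beta gamma i)))%E in
  if first == +oo%E then +oo%E else (first - second)%E.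

Definition is_NE (d : profile -> 'I_M -> \bar R) (a : profile) : Prop :=
  forall (i : 'I_M) (b : 'I_N), (d a i <= d (upd a i b) i)%E.

End Uplink.

From HB Require Import structures.
From mathcomp Require Import all_boot all_order all_algebra.
From mathcomp Require Import boolp classical_sets reals constructive_ereal ereal.
From mathcomp Require Import ring lra.
Set Implicit Arguments. Unset Strict Implicit. Unset Printing Implicit Defensive.
Import Order.TTheory GRing.Theory Num.Theory.
Local Open Scope ring_scope.

(* With equal gains both costs of mobile i depend only on its own beta_i = b
   and on the load x of the other mobiles at its base station: the untolled
   cost is K b / (1 - b - x) and the tolled one K b / ((1 - x)(1 - b - x)),
   both becoming +oo once x >= 1 - b.  Two such functions, strictly
   increasing below the same threshold and infinite above it, compare any
   two loads in the same way, so unilateral deviations are profitable in one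
   game exactly when they are in the other. *)

Section BlowupIncreasing.
Variable R : realType.

Definition blowup_incr (c : R) (phi : R -> \bar R) : Prop :=
  [/\ forall z : R, c <= z -> phi z = +oo%E,
      forall z : R, z < c -> (phi z < +oo)%E
    & forall u v : R, 0 <= u -> u < v -> u < c -> (phi u < phi v)%E].

Lemma blowup_incr_le (c : R) (phi : R -> \bar R) (x y : R) :
  blowup_incr c phi -> 0 <= x -> 0 <= y ->
  (phi x <= phi y)%E <-> (c <= y \/ x <= y).
Proof.
case=> phi_inf phi_fin phi_incr x0 y0; split.
- move=> le_phi; case: (lerP c y) => [|yc]; first by left.
  case: (lerP x y) => [|yx]; first by right.
  case: (lerP c x) => [cx|xc].
    move: le_phi; rewrite (phi_inf x cx) leye_eq => /eqP phiy.
    by have := phi_fin y yc; rewrite phiy ltxx.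
  by have := lt_le_trans (phi_incr y x y0 yx yc) le_phi; rewrite ltxx.
- case: (lerP c y) => [cy _|yc]; first by rewrite (phi_inf y cy) leey.
  case=> [//|]; rewrite le_eqVlt => /orP[/eqP -> //|xy].
  by apply/ltW/phi_incr => //; exact: lt_trans yc.
Qed.

Lemma blowup_incr_le_equiv (c : R) (phi psi : R -> \bar R) (x y : R) :
  blowup_incr c phi -> blowup_incr c psi -> 0 <= x -> 0 <= y ->
  (phi x <= phi y)%E <-> (psi x <= psi y)%E.
Proof.
move=> phiP psiP x0 y0.
by rewrite (blowup_incr_le phiP x0 y0) (blowup_incr_le psiP x0 y0).
Qed.

Lemma posp_id (v : R) : 0 < v -> posp v = v.
Proof. by move=> v0; rewrite /posp max_l // ltW. Qed.

Lemma posp_eq0 (v : R) : v <= 0 -> posp v = 0.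
Proof. by move=> v0; rewrite /posp max_r. Qed.

Lemma divE_posp_npos (x v : R) : v <= 0 -> divE x (posp v) = +oo%E.
Proof. by move=> v0; rewrite /divE posp_eq0 ?ltxx. Qed.

Lemma sum_divE_posp (I : finType) (P : pred I) (f : I -> R) (K v : R) :
  0 < v -> (\sum_(l | P l) divE (K * f l) (posp v))%E
           = (K * (\sum_(l | P l) f l) / v)%:E.
Proof.
move=> v0; rewrite (eq_bigr (fun l => (K * f l / v)%:E)); last first.
  by move=> l _; rewrite /divE posp_id // v0.
by rewrite sumEFin -mulr_suml -mulr_sumr.
Qed.

Section LoadCosts.
Variables K b : R.

Definition untolled_load_cost (x : R) : \bar R := divE (K * b) (posp (1 - (b + x))).

(* K (b + x) / (1 - (b + x)) - K x / (1 - x), brought to a common denominator *)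
Definition tolled_load_cost (x : R) : \bar R :=
  if 0 < 1 - (b + x) then (K * b / ((1 - x) * (1 - (b + x))))%:E else +oo%E.

Lemma untolled_load_cost_blowup : 0 < K -> 0 < b -> blowup_incr (1 - b) untolled_load_cost.
Proof.
move=> K0 b0; rewrite /untolled_load_cost; split.
- by move=> z zc; rewrite divE_posp_npos //; lra.
- by move=> z zc; rewrite /divE posp_id; [rewrite ifT ?ltry |]; lra.
- move=> u v u0 uv uc; rewrite /divE (posp_id (v := 1 - (b + u))); last lra.
  rewrite ifT; last lra.
  case: (lerP (1 - b) v) => vc.
    by rewrite posp_eq0 ?ltxx ?ltry //; lra.
  rewrite posp_id; last lra.
  rewrite ifT; last lra.
  by rewrite lte_fin ltr_pM2l ?mulr_gt0 // ltf_pV2 ?posrE; lra.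
Qed.

Lemma tolled_load_cost_blowup : 0 < K -> 0 < b -> blowup_incr (1 - b) tolled_load_cost.
Proof.
move=> K0 b0; rewrite /tolled_load_cost; split.
- by move=> z zc; rewrite ifF //; apply/negbTE; rewrite -leNgt; lra.
- by move=> z zc; rewrite ifT ?ltry //; lra.
- move=> u v u0 uv uc; rewrite ifT; last lra.
  case: (leP (1 - b) v) => vc.
    by rewrite ifF ?ltry //; apply/negbTE; rewrite -leNgt; lra.
  rewrite ifT; last lra.
  have lt_den : (1 - v) * (1 - (b + v)) < (1 - u) * (1 - (b + u)).
    have : 0 < (v - u) * ((1 - v) + (1 - (b + u))) by apply: mulr_gt0; lra.
    nra.
  by rewrite lte_fin ltr_pM2l ?mulr_gt0 // ltf_pV2 // posrE mulr_gt0 //; lra.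
Qed.

End LoadCosts.
End BlowupIncreasing.

Section EqualGains.
Variables (R : realType) (M N : nat).
Variables (hg : 'I_M -> 'I_N -> R) (h sigma2 : R) (gamma : 'I_M -> R).
Hypotheses (hconst : forall i j, hg i j = h) (gammapos : forall i, 0 < gamma i).

Definition others_load (a : @profile M N) (i : 'I_M) : R :=
  \sum_(k | (a k == a i) && (k != i)) beta gamma k.

Lemma beta_gt0 (i : 'I_M) : 0 < beta gamma i.
Proof. by rewrite /beta divr_gt0 // addr_gt0. Qed.

Lemma others_load_ge0 (a : @profile M N) (i : 'I_M) : 0 <= others_load a i.
Proof. by apply: sumr_ge0 => k _; exact/ltW/beta_gt0. Qed.

Lemma Sload_others (a : @profile M N) (i : 'I_M) :
  Sload gamma a i = beta gamma i + others_load a i.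
Proof. by rewrite /Sload (bigD1 i). Qed.

Lemma cost_equal_gains (a : @profile M N) (i : 'I_M) :
  cost sigma2 hg gamma a i
  = untolled_load_cost (sigma2 / h) (beta gamma i) (others_load a i).
Proof. by rewrite /cost hconst Sload_others. Qed.

Lemma tcost_equal_gains (a : @profile M N) (i : 'I_M) :
  tcost sigma2 hg gamma a i
  = tolled_load_cost (sigma2 / h) (beta gamma i) (others_load a i).
Proof.
rewrite /tcost /tolled_load_cost; set b := beta gamma i; set x := others_load a i.
have b0 : 0 < b := beta_gt0 i.
under eq_bigr do rewrite hconst.
under [X in (_ - X)%E]eq_bigr do rewrite hconst.
rewrite Sload_others -/b -/x; set K := sigma2 / h.
case: ltrP => [Sc|cS].
- have -> : 1 - (b + x) + b = 1 - x by ring.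
  rewrite !sum_divE_posp //; last lra.
  rewrite -Sload_others /Sload (bigD1 i) //= -/(others_load a i) -/b -/x.
  rewrite -EFinB; congr (_%:E).
  by field; apply/andP; split; apply/eqP; lra.
- under eq_bigr do rewrite divE_posp_npos //.
  by rewrite (bigD1 i) //= addye ?eqxx // gt_eqF // (lt_le_trans _ (sume_ge0 _ _)) ?ltNy0.
Qed.

End EqualGains.

Theorem proposition16 (R : realType) (M N : nat)
    (hg : 'I_M -> 'I_N -> R) (h sigma2 : R) (gamma : 'I_M -> R)
    (hpos : 0 < h) (hconst : forall i j, hg i j = h)
    (sigma2pos : 0 < sigma2) (gammapos : forall i, 0 < gamma i)
    (feasible : exists a : @profile M N,
        forall j : 'I_N, \sum_(l | a l == j) beta gamma l < 1) :
  forall a : @profile M N,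
    is_NE (tcost sigma2 hg gamma) a <-> is_NE (cost sigma2 hg gamma) a.
Proof.
move=> a; have K0 : 0 < sigma2 / h by rewrite divr_gt0.
suff same_order : forall i b,
    (tcost sigma2 hg gamma a i <= tcost sigma2 hg gamma (upd a i b) i)%E
    <-> (cost sigma2 hg gamma a i <= cost sigma2 hg gamma (upd a i b) i)%E.
  by split=> NE i b; apply/same_order/NE.
move=> i b; have bi0 := beta_gt0 gammapos i.
rewrite !(tcost_equal_gains sigma2 hconst gammapos) !(cost_equal_gains sigma2 gamma hconst).
exact: blowup_incr_le_equiv (tolled_load_cost_blowup K0 bi0)
  (untolled_load_cost_blowup K0 bi0) (others_load_ge0 gammapos a i)
  (others_load_ge0 gammapos (upd a i b) i).
Qed.
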